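(* Fix integers $z_1>z_2\ge0$ and $k\ge1$. For every $m\ge0$, the number of $(z_1,z_2,k)$-asymmetric partitions of $m$ equals the number of partitions of $m$ of the form \[\lambda^{\{a_1,\dots,a_r\}}=\Big(z_1(r-1)+r,\underbrace{2r-1,\dots,2r-1}_{a_r},\underbrace{2r-3,\dots,2r-3}_{a_{r-1}-a_r},\dots,\underbrace{2k-1,\dots,2k-1}_{a_k-a_{k+1}},\underbrace{2k-2,\dots,2k-2}_{a_{k-1}-a_k},\dots,\underbrace{2,\dots,2}_{a_1-a_2},\underbrace{1,\dots,1}_{z_2}\Big)\] for some integer $r\ge k$ and integers $a_1>a_2>\dots>a_r\ge0$.
   Context: The Frobenius rank of a partition $\mu$ is $r=\max\{j:\mu_j\ge j\}$ and its Frobenius coordinates are $(\alpha\mid\beta)$ with $\alpha_i=\mu_i-i$, $\beta_i=\mu'_i-i$ ($1\le i\le r$, $\mu'$ the conjugate). For $1\le k\le r$, $\mu$ is $(z_1,z_2,k)$-asymmetric if $\mu=(\alpha_1,\dots,\alpha_r\mid\alpha_1+z_1,\dots,\widehat{\alpha_k+z_1},\dots,\alpha_r+z_1,z_2)$ for some strict partition $\alpha$, where the hat denotes omission (so the column coordinates are the decreasing arrangement of $\{\alpha_j+z_1:j\ne k\}\cup\{z_2\}$). *)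

From mathcomp Require Import all_boot.
From mathcomp Require Import boolp.

Set Implicit Arguments.
Unset Strict Implicit.
Unset Printing Implicit Defensive.

Definition is_part (s : seq nat) : bool :=
  sorted geq s && all (fun x => 0 < x) s.

Fixpoint seqs_upto (l b : nat) : seq (seq nat) :=
  match l with
  | 0 => [:: [::]]
  | l'.+1 => [::] :: [seq x :: s | x <- iota 1 b, s <- seqs_upto l' b]
  end.

Definition partitions (m : nat) : seq (seq nat) :=
  undup [seq s <- seqs_upto m m | is_part s && (sumn s == m)].

Definition npart (m : nat) (P : seq nat -> Prop) : nat :=
  count (fun s => `[< P s >]) (partitions m).

(* mu_j, 1-indexed (0 beyond the length). *)
Definition mu_at (mu : seq nat) (j : nat) : nat := nth 0 mu j.-1.

Definition conj_at (mu : seq nat) (i : nat) : nat := count (fun x => i <= x) mu.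

Definition frob_rank (mu : seq nat) : nat :=
  \max_(1 <= j < (size mu).+1 | j <= mu_at mu j) j.

Definition frob_row (mu : seq nat) : seq nat :=
  [seq mu_at mu i - i | i <- iota 1 (frob_rank mu)].
Definition frob_col (mu : seq nat) : seq nat :=
  [seq conj_at mu i - i | i <- iota 1 (frob_rank mu)].

Definition asym (z1 z2 k : nat) (mu : seq nat) : Prop :=
  1 <= k <= frob_rank mu /\
  exists alpha : seq nat,
    [/\ sorted (fun x y => y < x) alpha,
        size alpha = frob_rank mu,
        frob_row mu = alpha &
        frob_col mu =
          sort geq (z2 :: [seq nth 0 alpha j.-1 + z1
                          | j <- [seq j <- iota 1 (size alpha) | j != k]])].

(* lambda^{a_1,...,a_r}, with a = [:: a_1; ...; a_r] and a_{r+1} = 0. *)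
Definition lam (z1 z2 k r : nat) (a : seq nat) : seq nat :=
  (z1 * (r - 1) + r) ::
    flatten [seq nseq (nth 0 a i.-1 - nth 0 a i)
                      (if k <= i then (2 * i).-1 else 2 * i)
            | i <- rev (iota 1 r)]
    ++ nseq z2 1.

Definition lam_form (z1 z2 k : nat) (mu : seq nat) : Prop :=
  exists (r : nat) (a : seq nat),
    [/\ k <= r, size a = r, sorted (fun x y => y < x) a & mu = lam z1 z2 k r a].

From mathcomp Require Import all_boot.
From mathcomp Require Import boolp.
From mathcomp Require Import zify.

Set Implicit Arguments.
Unset Strict Implicit.
Unset Printing Implicit Defensive.

(* A partition of Frobenius rank r is determined by its Frobenius coordinates
   (alpha | beta), any two strictly decreasing sequences of length r occur as
   such coordinates, and the size of the partition is r + |alpha| + |beta|.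
   A (z1, z2, k)-asymmetric partition is thus the same thing as a strictly
   decreasing alpha of length r >= k, and its size is
   r + (r - 1) z1 + z2 + alpha_k + 2 sum_{j <> k} alpha_j.
   In lambda^alpha the part c_i (= 2i - 1 for i >= k, 2i for i < k) occurs
   alpha_i - alpha_{i+1} times; these multiplicities recover alpha, and Abel
   summation turns the size into (r - 1) z1 + r + z2 + sum_i (c_i - c_{i-1}) alpha_i,
   where c_i - c_{i-1} is 1 for i = k and 2 otherwise. Hence
   alpha |-> lambda^alpha is a size-preserving bijection. *)

Lemma geq_trans : transitive geq.
Proof. exact: rev_trans leq_trans. Qed.

Lemma sorted_gtn_geq (s : seq nat) : sorted gtn s -> sorted geq s.
Proof. by apply: sub_sorted => x y /ltnW. Qed.

Lemma sorted_geq_nth (s : seq nat) i j : sorted geq s -> i <= j ->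
  nth 0 s j <= nth 0 s i.
Proof.
move=> s_sorted le_ij; case: (ltnP j (size s)) => [lt_js|le_sj]; last by rewrite nth_default.
by apply: (sorted_leq_nth geq_trans leqnn) => //; rewrite inE; lia.
Qed.

Lemma sorted_gtn_nth (s : seq nat) i : sorted gtn s -> i.+1 < size s ->
  nth 0 s i.+1 < nth 0 s i.
Proof. by move=> /(sortedP 0); apply. Qed.

Lemma sorted_gtn_nth_size (s : seq nat) i : sorted gtn s -> i < size s ->
  size s <= nth 0 s i + i.+1.
Proof.
elim: s i => [|x s IH] [|i] //= s_sorted lt_is.
  case: s IH s_sorted {lt_is} => [|y s] IH /= => [_|/andP[lt_yx s_sorted]]; first lia.
  by have := IH 0 s_sorted isT; rewrite /=; lia.
by have := IH i (path_sorted s_sorted) lt_is; lia.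
Qed.

Lemma sorted_geq_cat (s t : seq nat) : sorted geq s -> sorted geq t ->
  {in s & t, forall x y, y <= x} -> sorted geq (s ++ t).
Proof.
rewrite !(sorted_pairwise geq_trans) pairwise_cat => -> -> st.
by rewrite !andbT; apply/allrelP.
Qed.

Lemma sorted_geq_nseq n x : sorted geq (nseq n x).
Proof. by elim: n => [|[|n] IH] //=; rewrite leqnn. Qed.

Lemma eq_sorted_geq_count n (s t : seq nat) : sorted geq s -> sorted geq t ->
  {in s, forall x, 0 < x <= n} -> {in t, forall x, 0 < x <= n} ->
  (forall j, 0 < j <= n -> count (leq j) s = count (leq j) t) -> s = t.
Proof.
move=> s_sorted t_sorted s_bnd t_bnd eq_cnt.
have cnt_gt j s' : {in s', forall x, 0 < x <= n} -> n < j -> count (leq j) s' = 0.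
  move=> bnd lt_nj; apply/eqP; rewrite -leqn0 leqNgt -has_count.
  by apply/hasP => -[x /bnd]; lia.
have cnt_pos s' : {in s', forall x, 0 < x <= n} -> count (leq 1) s' = size s'.
  by move=> bnd; apply/eqP; rewrite -all_count; apply/allP => x /bnd; lia.
have eq_cnt_pos j : 0 < j -> count (leq j) s = count (leq j) t.
  by case: (leqP j n) => [le_jn|lt_nj] j_gt0; [apply: eq_cnt; lia | rewrite !cnt_gt].
have {}eq_cnt j : count (leq j) s = count (leq j) t.
  case: j => [|j]; last exact: eq_cnt_pos.
  rewrite !(eq_count (a2 := predT)) // !count_predT.
  by rewrite -cnt_pos // -[size t]cnt_pos // eq_cnt_pos.
apply: (sorted_eq geq_trans) => //; first by move=> x y /anti_leq/esym.
apply/allP => x _; apply/eqP.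
have cnt_split s' : count (leq x) s' = count_mem x s' + count (leq x.+1) s'.
  elim: s' => //= y s' ->.
  by case: (ltngtP x y) => [lt_xy|lt_yx|eq_xy];
    rewrite ?eq_xy ?eqxx ?(gtn_eqF lt_xy) ?(ltn_eqF lt_yx) /=; lia.
apply/eqP; rewrite -(eqn_add2r (count (leq x.+1) s)).
by rewrite -cnt_split eq_cnt cnt_split eq_cnt.
Qed.

Lemma eq_from_diffs (s t : seq nat) : size s = size t -> sorted geq s -> sorted geq t ->
  (forall i, i < size s -> nth 0 s i - nth 0 s i.+1 = nth 0 t i - nth 0 t i.+1) -> s = t.
Proof.
elim: s t => [|x s IH] [|y t] //= [eq_size] s_sorted t_sorted diffs.
have eq_st : s = t.
  apply: IH => //; [exact: path_sorted s_sorted | exact: path_sorted t_sorted |].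
  by move=> i lt_i; apply: (diffs i.+1).
rewrite -eq_st in t_sorted diffs *; congr (_ :: _).
have := diffs 0 isT; have := @sorted_geq_nth (x :: s) 0 1 s_sorted isT.
by have := @sorted_geq_nth (y :: s) 0 1 t_sorted isT; rewrite /=; lia.
Qed.

Lemma ltn_ext m n : (forall i, (i < m) = (i < n)) -> m = n.
Proof. by move=> ltE; apply/eqP; rewrite eqn_leq leqNgt ltE ltnn leqNgt -ltE ltnn. Qed.

Lemma sum_iota_succ n : (\sum_(0 <= i < n) i.+1) * 2 = n * n.+1.
Proof.
elim: n => [|n IH]; first by rewrite big_geq.
by rewrite big_nat_recr //= mulnDl IH; nia.
Qed.

Lemma sumn_nth (s : seq nat) : sumn s = \sum_(0 <= i < size s) nth 0 s i.
Proof. by rewrite sumnE (big_nth 0). Qed.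

Lemma count_eq_bij (T : eqType) (s : seq T) (P Q : pred T) (f : T -> T) : uniq s ->
  {in s, forall x, P x -> f x \in s /\ Q (f x)} ->
  {in filter P s &, injective f} ->
  {in s, forall y, Q y -> exists2 x, (x \in s) && P x & f x = y} ->
  count P s = count Q s.
Proof.
move=> s_uniq f_maps f_inj f_onto; rewrite -!size_filter -(size_map f).
apply/perm_size/uniq_perm; first by rewrite map_inj_in_uniq ?filter_uniq.
  exact: filter_uniq.
move=> y; rewrite mem_filter; apply/mapP/andP => [[x] | [Qy sy]].
  by rewrite mem_filter => /andP[Px sx] ->; have [] := f_maps x sx Px.
by have [x /andP[sx Px] <-] := f_onto y sy Qy; exists x; rewrite ?mem_filter ?Px.
Qed.

Definition staircase (c e : nat -> nat) (r : nat) : seq nat :=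
  flatten [seq nseq (e i.-1 - e i) (c i) | i <- rev (iota 1 r)].

Section Staircase.
Variable e : nat -> nat.
Hypothesis e_noninc : {homo e : i j /~ i <= j}.

Lemma staircaseS c r :
  staircase c e r.+1 = nseq (e r - e r.+1) (c r.+1) ++ staircase c e r.
Proof.
rewrite /staircase; have -> : rev (iota 1 r.+1) = r.+1 :: rev (iota 1 r).
  by rewrite -[r.+1]addn1 iotaD rev_cat add1n addn1.
by [].
Qed.

Lemma mem_staircase c r x :
  x \in staircase c e r -> exists2 i, 0 < i <= r & x = c i.
Proof.
move=> /flatten_mapP[i]; rewrite mem_rev mem_iota => i_bnd.
by rewrite mem_nseq => /andP[_ /eqP ->]; exists i => //; lia.
Qed.

Lemma count_staircase_out c (p : pred nat) r :
  (forall i, 0 < i <= r -> ~~ p (c i)) -> count p (staircase c e r) = 0.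
Proof.
move=> out; apply/eqP; rewrite -leqn0 leqNgt -has_count.
by apply/hasP => -[_ /mem_staircase[i /out/negP not_p ->]].
Qed.

Lemma sorted_staircase c r :
  {homo c : i j / i <= j} -> sorted geq (staircase c e r).
Proof.
move=> c_mono; elim: r => [|r IH] //; rewrite staircaseS.
apply: sorted_geq_cat => //; first exact: sorted_geq_nseq.
by move=> _ _ /nseqP[-> _] /mem_staircase[i i_bnd ->]; apply: c_mono; lia.
Qed.

Lemma count_mem_staircase c r j : {homo c : i j / i < j} -> 0 < j <= r ->
  count_mem (c j) (staircase c e r) = e j.-1 - e j.
Proof.
move=> c_incr; elim: r => [|r IH] j_bnd; first lia.
rewrite staircaseS count_cat count_nseq /=.
have [->|lt_jr] := eqVneq j r.+1.
  rewrite eqxx mul1n count_staircase_out ?addn0 // => i i_bnd.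
  by rewrite /= ltn_eqF // c_incr //; lia.
by rewrite gtn_eqF ?c_incr ?IH //; lia.
Qed.

Lemma count_leq_staircase r j : 0 < j <= r ->
  count (leq j) (staircase id e r) = e j.-1 - e r.
Proof.
elim: r => [|r IH] j_bnd; first lia.
rewrite staircaseS count_cat count_nseq /=.
have [->|lt_jr] := eqVneq j r.+1.
  by rewrite leqnn mul1n count_staircase_out ?addn0 // => i /= i_bnd; rewrite -ltnNge; lia.
have le_jr : j.-1 <= r by lia.
by have := e_noninc (leqnSn r); have := e_noninc le_jr; rewrite IH //; lia.
Qed.

Lemma sumn_staircase c r : {homo c : i j / i <= j} ->
  sumn (staircase c e r) + c r * e r =
  \sum_(0 <= i < r) (c i.+1 - c i) * e i + c 0 * e 0.
Proof.
move=> c_mono; elim: r => [|r IH]; first by rewrite big_geq.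
rewrite staircaseS sumn_cat sumn_nseq big_nat_recr //= [RHS]addnAC -IH.
have le_c := c_mono _ _ (leqnSn r); have le_e := e_noninc (leqnSn r).
have := leq_mul le_c (leqnn (e r)); have := leq_mul (leqnn (c r.+1)) le_e.
rewrite mulnC mulnBl mulnBr; lia.
Qed.

End Staircase.

Lemma frob_rank_max mu j : j <= size mu -> j <= mu_at mu j -> j <= frob_rank mu.
Proof.
case: j => [//|j] le_size le_at.
by apply: (leq_bigmax_seq j.+1) => //; rewrite mem_index_iota.
Qed.

Lemma frob_rank_attained mu : 0 < frob_rank mu -> frob_rank mu <= mu_at mu (frob_rank mu).
Proof.
rewrite /frob_rank; elim/big_ind: _ => // x y Px Py.
by case: (leqP x y).
Qed.

Lemma size_frob_row mu : size (frob_row mu) = frob_rank mu.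
Proof. by rewrite size_map size_iota. Qed.

Lemma size_frob_col mu : size (frob_col mu) = frob_rank mu.
Proof. by rewrite size_map size_iota. Qed.

Lemma nth_frob_row mu i : i < frob_rank mu -> nth 0 (frob_row mu) i = nth 0 mu i - i.+1.
Proof. by move=> lt_ir; rewrite (nth_map 0) ?size_iota // nth_iota. Qed.

Lemma nth_frob_col mu i : i < frob_rank mu -> nth 0 (frob_col mu) i = conj_at mu i.+1 - i.+1.
Proof. by move=> lt_ir; rewrite (nth_map 0) ?size_iota // nth_iota. Qed.

Definition frob_head (a : seq nat) : seq nat := [seq nth 0 a i + i.+1 | i <- iota 0 (size a)].

Lemma size_frob_head a : size (frob_head a) = size a.
Proof. by rewrite size_map size_iota. Qed.

Lemma nth_frob_head a i : i < size a -> nth 0 (frob_head a) i = nth 0 a i + i.+1.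
Proof. by move=> lt_ia; rewrite (nth_map 0) ?size_iota // nth_iota. Qed.

Section PartitionFrobenius.
Variable mu : seq nat.
Hypothesis mu_part : is_part mu.
Local Notation r := (frob_rank mu).

Let mu_sorted : sorted geq mu. Proof. by case/andP: mu_part. Qed.

Let mu_pos x : x \in mu -> 0 < x.
Proof. by case/andP: mu_part => _ /allP; apply. Qed.

(* For a partition, [j <= mu_j] is downward closed in [j], so the maximum
   defining the rank is a threshold. *)
Lemma frob_rankP i : (i < r) = (i < nth 0 mu i).
Proof.
apply/idP/idP => [lt_ir | lt_i_nth].
  have := frob_rank_attained (leq_ltn_trans (leq0n i) lt_ir); rewrite /mu_at.
  have := sorted_geq_nth mu_sorted (_ : i <= r.-1); lia.
apply: frob_rank_max; last by rewrite /mu_at.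
by case: (ltnP i (size mu)) => // /(nth_default 0) nth0; rewrite nth0 in lt_i_nth.
Qed.

Lemma frob_rank_le_size : r <= size mu.
Proof.
rewrite leqNgt; apply/negP => lt_size.
by have := frob_rankP (size mu); rewrite lt_size nth_default.
Qed.

Lemma frob_rank_le_nth i : i < r -> r <= nth 0 mu i.
Proof.
move=> lt_ir; have := frob_rankP r.-1; rewrite prednK ?leqnn; last lia.
move=> /esym le_r_nth; apply: leq_trans le_r_nth _.
by apply: sorted_geq_nth; lia.
Qed.

Lemma nth_le_frob_rank i : r <= i -> nth 0 mu i <= r.
Proof.
move=> le_ri; have := frob_rankP r; rewrite ltnn => /esym/negbT.
by have := sorted_geq_nth mu_sorted le_ri; lia.
Qed.

Lemma take_frob_rank : take r mu = frob_head (frob_row mu).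
Proof.
have size_take : size (take r mu) = r by rewrite size_takel // frob_rank_le_size.
apply: (eq_from_nth (x0 := 0)); first by rewrite size_frob_head size_frob_row.
rewrite size_take => i lt_ir.
rewrite nth_take // nth_frob_head ?size_frob_row // nth_frob_row // subnK //.
by apply: leq_trans (frob_rank_le_nth lt_ir).
Qed.

Lemma drop_frob_rank_bnd x : x \in drop r mu -> 0 < x <= r.
Proof.
move=> x_drop; rewrite mu_pos ?(mem_drop x_drop) //=.
move: x_drop => /(nthP 0)[i _ <-]; rewrite nth_drop nth_le_frob_rank //; lia.
Qed.

Lemma count_drop_frob_rank j : 0 < j <= r ->
  count (leq j) (drop r mu) + r = nth 0 (frob_col mu) j.-1 + j.
Proof.
move=> j_bnd; rewrite nth_frob_col prednK; [|lia..].
have cnt_take : count (leq j) (take r mu) = r.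
  rewrite -{2}(size_takel frob_rank_le_size); apply/eqP; rewrite -all_count.
  apply/allP => x /(nthP 0)[i]; rewrite size_takel ?frob_rank_le_size // => lt_ir <-.
  by rewrite nth_take //; apply: leq_trans (frob_rank_le_nth lt_ir); lia.
have -> : conj_at mu j = count (leq j) (take r mu ++ drop r mu) by rewrite cat_take_drop.
rewrite count_cat cnt_take; lia.
Qed.

End PartitionFrobenius.

Lemma frob_coords_inj mu1 mu2 : is_part mu1 -> is_part mu2 ->
  frob_row mu1 = frob_row mu2 -> frob_col mu1 = frob_col mu2 -> mu1 = mu2.
Proof.
move=> mu1_part mu2_part eq_row eq_col.
have eq_rank : frob_rank mu1 = frob_rank mu2 by rewrite -!size_frob_row eq_row.
rewrite -(cat_take_drop (frob_rank mu1) mu1) -(cat_take_drop (frob_rank mu2) mu2).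
rewrite !take_frob_rank // eq_row; congr (_ ++ _).
apply: (eq_sorted_geq_count (n := frob_rank mu1)).
- by apply: drop_sorted; case/andP: mu1_part.
- by apply: drop_sorted; case/andP: mu2_part.
- exact: drop_frob_rank_bnd.
- by rewrite eq_rank; apply: drop_frob_rank_bnd.
move=> j j_bnd; have := count_drop_frob_rank mu1_part j_bnd.
rewrite eq_rank in j_bnd; have := count_drop_frob_rank mu2_part j_bnd.
by rewrite eq_col eq_rank; lia.
Qed.

(* The partition with Frobenius coordinates (a | b): its first r = size a rows
   have lengths a_i + i, and below them column j <= r has b_j + j - r cells
   (indices from 1). [col_len b r] lists the column lengths b_j + j, padded
   with r beyond the rank. *)
Definition col_len (b : seq nat) (r i : nat) : nat :=
  if i < r then nth 0 b i + i.+1 else r.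

Definition frob_part (a b : seq nat) : seq nat :=
  frob_head a ++ staircase id (col_len b (size a)) (size a).

Section FrobPart.
Variables a b : seq nat.
Hypotheses (a_strict : sorted gtn a) (b_strict : sorted gtn b) (size_b : size b = size a).
Local Notation r := (size a).
Local Notation tail := (staircase id (col_len b r) r).

Lemma col_len_noninc : {homo col_len b r : i j /~ i <= j}.
Proof.
move=> i j le_ji; apply: (homo_leq (r := fun m n => n <= m)) le_ji => // [m n p|{}i].
  by move=> le_nm le_pn; apply: leq_trans le_pn le_nm.
rewrite /col_len; case: (ltnP i.+1 r) => [lt_i1r|le_ri1]; last by case: ifP => _; lia.
by rewrite (ltnW lt_i1r); have := sorted_gtn_nth b_strict (_ : i.+1 < size b); lia.
Qed.

Lemma frob_head_ge x : x \in frob_head a -> r <= x.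
Proof.
by move=> /mapP[i]; rewrite mem_iota => i_bnd ->; apply: sorted_gtn_nth_size.
Qed.

Lemma frob_tail_bnd x : x \in tail -> 0 < x <= r.
Proof. by move=> /mem_staircase[i i_bnd ->]. Qed.

Lemma nth_frob_part i : i < r -> nth 0 (frob_part a b) i = nth 0 a i + i.+1.
Proof. by move=> lt_ir; rewrite nth_cat size_frob_head lt_ir nth_frob_head. Qed.

Lemma nth_frob_part_tail i : r <= i -> nth 0 (frob_part a b) i <= r.
Proof.
move=> le_ri; rewrite nth_cat size_frob_head ltnNge le_ri /=.
case: (ltnP (i - r) (size tail)) => [lt_size|le_size]; last by rewrite nth_default.
by have /frob_tail_bnd/andP[] := mem_nth 0 lt_size.
Qed.

Lemma is_part_frob_part : is_part (frob_part a b).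
Proof.
apply/andP; split.
  apply: sorted_geq_cat.
  - apply/(sortedP 0) => i; rewrite size_frob_head => lt_i1r.
    rewrite !nth_frob_head ?(ltnW lt_i1r) //=.
    by have := sorted_gtn_nth a_strict lt_i1r; lia.
  - by apply: sorted_staircase => i j.
  - by move=> x y /frob_head_ge le_rx /frob_tail_bnd; lia.
apply/allP => x; rewrite mem_cat => /orP[/mapP[i _ ->]|/frob_tail_bnd/andP[] //].
by rewrite addnS.
Qed.

Lemma frob_rank_frob_part : frob_rank (frob_part a b) = r.
Proof.
apply: ltn_ext => i; rewrite (frob_rankP is_part_frob_part).
case: (ltnP i r) => [lt_ir|le_ri].
  by apply/idP; rewrite nth_frob_part; [lia | exact: lt_ir].
by apply/negbTE; rewrite -leqNgt; apply: leq_trans (nth_frob_part_tail le_ri) le_ri.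
Qed.

Lemma frob_row_frob_part : frob_row (frob_part a b) = a.
Proof.
apply: (eq_from_nth (x0 := 0)); first by rewrite size_frob_row frob_rank_frob_part.
rewrite size_frob_row frob_rank_frob_part => i lt_ir.
by rewrite nth_frob_row ?frob_rank_frob_part // nth_frob_part // addnK.
Qed.

Lemma conj_at_frob_part j : 0 < j <= r -> conj_at (frob_part a b) j = nth 0 b j.-1 + j.
Proof.
move=> j_bnd; rewrite /conj_at count_cat.
have -> : count (fun x => j <= x) (frob_head a) = r.
  rewrite -(size_frob_head a); apply/eqP; rewrite -all_count.
  by apply/allP => x /frob_head_ge; lia.
rewrite (count_leq_staircase col_len_noninc j_bnd) /col_len ltnn.
rewrite (_ : j.-1 < r) ?prednK; [|lia..].
have := sorted_gtn_nth_size b_strict (_ : j.-1 < size b); rewrite prednK; lia.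
Qed.

Lemma frob_col_frob_part : frob_col (frob_part a b) = b.
Proof.
apply: (eq_from_nth (x0 := 0)); first by rewrite size_frob_col frob_rank_frob_part.
rewrite size_frob_col frob_rank_frob_part => i lt_ir.
by rewrite nth_frob_col ?frob_rank_frob_part // conj_at_frob_part // addnK.
Qed.

Lemma sumn_frob_part : sumn (frob_part a b) = r + sumn a + sumn b.
Proof.
have sum_head : sumn (frob_head a) = \sum_(0 <= i < r) (nth 0 a i + i.+1).
  by rewrite sumnE big_map /index_iota subn0.
have sum_tail : sumn tail + r * r = \sum_(0 <= i < r) (nth 0 b i + i.+1).
  have := sumn_staircase col_len_noninc r (fun i j (le_ij : i <= j) => le_ij).
  rewrite /= {2}/col_len ltnn mul0n addn0 => ->.
  by apply: eq_big_nat => i /andP[_ lt_ir]; rewrite /col_len lt_ir subSnn mul1n.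
have := sum_iota_succ r; move: sum_tail.
rewrite sumn_cat sum_head (sumn_nth a) (sumn_nth b) size_b !big_split /= mulnS; lia.
Qed.

End FrobPart.

Definition asym_col (z1 z2 k : nat) (a : seq nat) : seq nat :=
  sort geq (z2 :: [seq nth 0 a j.-1 + z1 | j <- [seq j <- iota 1 (size a) | j != k]]).

Section AsymCol.
Variables (z1 z2 k : nat) (a : seq nat).
Hypothesis k_bnd : 0 < k <= size a.

Lemma sorted_asym_col : z2 < z1 -> sorted gtn a -> sorted gtn (asym_col z1 z2 k a).
Proof.
move=> z2_lt_z1 a_strict.
rewrite gtn_sorted_uniq_geq sort_uniq (sort_sorted (fun x y => leq_total y x)) andbT /=.
have a_uniq : uniq a by move: a_strict; rewrite gtn_sorted_uniq_geq => /andP[].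
apply/andP; split; first by apply/mapP => -[j _]; lia.
rewrite map_inj_in_uniq ?filter_uniq ?iota_uniq // => i j.
rewrite !mem_filter !mem_iota => /andP[_ /andP[i_pos i_lt]] /andP[_ /andP[j_pos j_lt]].
have lt_i : i.-1 < size a by lia.
have lt_j : j.-1 < size a by lia.
move=> /addIn /eqP; rewrite nth_uniq // => /eqP eq_ij.
by rewrite -(prednK i_pos) -(prednK j_pos) eq_ij.
Qed.

Lemma count_iota_neq : count (fun j => j != k) (iota 1 (size a)) = (size a).-1.
Proof.
have k_in : k \in iota 1 (size a) by rewrite mem_iota; lia.
rewrite -[in RHS](size_iota 1 (size a)) -(count_predC (pred1 k) (iota 1 (size a))).
by rewrite count_uniq_mem ?iota_uniq // k_in add1n.
Qed.

Lemma size_asym_col : size (asym_col z1 z2 k a) = size a.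
Proof. by rewrite size_sort /= size_map size_filter count_iota_neq prednK //; lia. Qed.

Lemma sumn_asym_col : sumn (asym_col z1 z2 k a) =
  z2 + z1 * (size a).-1 + \sum_(0 <= i < size a) (i != k.-1) * nth 0 a i.
Proof.
rewrite (perm_sumn (permEl (perm_sort _ _))) /= sumnE big_map big_filter big_split /=.
rewrite big_const_seq iter_addn_0 count_iota_neq [in RHS]addnAC -addnA.
have -> : iota 1 (size a) = map (addn 1) (iota 0 (size a)) by rewrite -iotaDl.
rewrite big_map big_mkcond /index_iota subn0; congr (_ + (_ + _)).
apply: eq_bigr => i _; rewrite add1n -(eqSS i) prednK; last by case/andP: k_bnd.
by case: eqP; rewrite ?mul1n.
Qed.

End AsymCol.

Definition lam_val (k i : nat) : nat := if k <= i then (2 * i).-1 else 2 * i.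

Lemma lamE z1 z2 k r a :
  lam z1 z2 k r a = (z1 * (r - 1) + r) :: staircase (lam_val k) (nth 0 a) r ++ nseq z2 1.
Proof. by []. Qed.

Lemma lam_val_incr k : {homo lam_val k : i j / i < j}.
Proof. by move=> i j; rewrite /lam_val; case: ifP; case: ifP; lia. Qed.

Lemma lam_val_step k i : 0 < k -> lam_val k i.+1 - lam_val k i = (i != k.-1).+1.
Proof. by move=> k_pos; rewrite /lam_val; case: eqVneq; case: ifP; case: ifP; lia. Qed.

Lemma is_part_lam z1 z2 k r a : 0 < z1 -> 0 < k <= r -> is_part (lam z1 z2 k r a).
Proof.
move=> z1_pos /andP[k_pos le_kr]; rewrite lamE /is_part /=.
have head_pos : 0 < z1 * (r - 1) + r by rewrite addn_gt0 (leq_trans k_pos le_kr) orbT.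
have lam_val_pos i : 0 < i -> 0 < lam_val k i by rewrite /lam_val; case: ifP; lia.
have le_lam_val i : 0 < i <= r -> lam_val k i <= z1 * (r - 1) + r.
  have := leq_pmull (r - 1) z1_pos; rewrite /lam_val; case: ifP; lia.
apply/andP; split.
  rewrite path_min_sorted.
    apply: sorted_geq_cat.
    - exact/sorted_staircase/ltnW_homo/lam_val_incr.
    - exact: sorted_geq_nseq.
    by move=> _ _ /mem_staircase[i /andP[/lam_val_pos ? _] ->] /nseqP[-> _].
  apply/allP => x; rewrite mem_cat.
  by case/orP => [/mem_staircase[i /le_lam_val ? ->] | /nseqP[-> _]] //=; rewrite head_pos.
rewrite head_pos /=; apply/allP => x; rewrite mem_cat.
by case/orP => [/mem_staircase[i /andP[/lam_val_pos ? _] ->] | /nseqP[-> _]].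
Qed.

Lemma sumn_lam z1 z2 k a : 0 < k -> sorted gtn a ->
  sumn (lam z1 z2 k (size a) a) =
  z1 * (size a - 1) + size a + z2 + \sum_(0 <= i < size a) (i != k.-1).+1 * nth 0 a i.
Proof.
move=> k_pos a_strict; rewrite lamE /= sumn_cat sumn_nseq mul1n.
have a_noninc : {homo nth 0 a : i j /~ i <= j}.
  by move=> i j; apply: sorted_geq_nth; apply: sorted_gtn_geq.
have lam_val0 : lam_val k 0 = 0 by rewrite /lam_val leqNgt k_pos.
have := sumn_staircase a_noninc (size a) (ltnW_homo (lam_val_incr k)).
rewrite nth_default // muln0 addn0 lam_val0 mul0n addn0 => ->.
rewrite (eq_big_nat _ _ (F2 := fun i => (i != k.-1).+1 * nth 0 a i)); first lia.
by move=> i _; rewrite lam_val_step.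
Qed.

Lemma lam_inj z1 z2 k a1 a2 : 0 < k -> sorted gtn a1 -> sorted gtn a2 ->
  lam z1 z2 k (size a1) a1 = lam z1 z2 k (size a2) a2 -> a1 = a2.
Proof.
move=> k_pos a1_strict a2_strict; rewrite !lamE => -[eq_head eq_tail].
have eq_size : size a1 = size a2.
  have head_mono r1 r2 : r1 < r2 -> z1 * (r1 - 1) + r1 < z1 * (r2 - 1) + r2.
    by move=> lt_r; rewrite -addnS leq_add // leq_mul2l leq_sub2r ?orbT // ltnW.
  by case: (ltngtP (size a1) (size a2)) => // /head_mono; rewrite eq_head ltnn.
apply: eq_from_diffs => //; [exact: sorted_gtn_geq | exact: sorted_gtn_geq | ] => i lt_i.
have j_bnd1 : 0 < i.+1 <= size a1 by [].
have j_bnd2 : 0 < i.+1 <= size a2 by rewrite -eq_size.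
move: (congr1 (count_mem (lam_val k i.+1)) eq_tail); rewrite !count_cat.
by rewrite !(count_mem_staircase _ (lam_val_incr k)) // => /addIn.
Qed.

Section Asymmetric.
Variables z1 z2 k : nat.
Hypotheses (z2_lt_z1 : z2 < z1) (k_pos : 0 < k).

Lemma asym_frob_part a : sorted gtn a -> k <= size a ->
  let mu := frob_part a (asym_col z1 z2 k a) in
  [/\ is_part mu, asym z1 z2 k mu & frob_row mu = a].
Proof.
move=> a_strict le_k; have k_bnd : 0 < k <= size a by rewrite k_pos.
have b_strict := sorted_asym_col k_bnd z2_lt_z1 a_strict.
have size_b := size_asym_col z1 z2 k_bnd.
rewrite /= frob_row_frob_part //; split => //; first exact: is_part_frob_part.
split; first by rewrite frob_rank_frob_part ?k_bnd.
by exists a; rewrite frob_rank_frob_part ?frob_row_frob_part ?frob_col_frob_part.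
Qed.

Lemma asym_eq_frob_part mu : is_part mu -> asym z1 z2 k mu ->
  [/\ sorted gtn (frob_row mu), k <= size (frob_row mu)
    & mu = frob_part (frob_row mu) (asym_col z1 z2 k (frob_row mu))].
Proof.
move=> mu_part [/andP[_ le_k] [a [a_strict size_a row_eq col_eq]]].
rewrite row_eq size_a; split => //; have k_bnd : 0 < k <= size a by rewrite k_pos size_a.
have b_strict := sorted_asym_col k_bnd z2_lt_z1 a_strict.
have size_b := size_asym_col z1 z2 k_bnd.
apply: frob_coords_inj => //; first exact: is_part_frob_part.
  by rewrite frob_row_frob_part.
by rewrite frob_col_frob_part.
Qed.

Lemma sumn_frob_part_asym a : sorted gtn a -> k <= size a ->
  sumn (frob_part a (asym_col z1 z2 k a)) = sumn (lam z1 z2 k (size a) a).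
Proof.
move=> a_strict le_k; have k_bnd : 0 < k <= size a by rewrite k_pos.
rewrite sumn_frob_part ?size_asym_col ?sorted_asym_col // sumn_asym_col // sumn_lam //.
have -> : \sum_(0 <= i < size a) (i != k.-1).+1 * nth 0 a i =
          sumn a + \sum_(0 <= i < size a) (i != k.-1) * nth 0 a i.
  by rewrite sumn_nth -big_split; apply: eq_bigr => i _; rewrite mulSn.
rewrite subn1; lia.
Qed.

End Asymmetric.

Lemma seqs_upto_mem l b s : size s <= l -> all (fun x => 0 < x <= b) s ->
  s \in seqs_upto l b.
Proof.
elim: l s => [|l IH] [|x s] //=; rewrite ?in_cons ?eqxx //.
move=> size_s /andP[x_bnd s_bnd]; apply/orP; right.
by apply/allpairsP; exists (x, s); rewrite mem_iota IH //; split => //; lia.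
Qed.

Lemma mem_partitions m s : (s \in partitions m) = is_part s && (sumn s == m).
Proof.
rewrite /partitions mem_undup mem_filter.
apply/andP/idP => [[] // | /[dup] /andP[/andP[_ s_pos] /eqP <-] ->]; split => //.
apply: seqs_upto_mem.
  by elim: s s_pos => //= x s IH /andP[x_pos /IH]; lia.
apply/allP => x x_s; move/allP: s_pos => /(_ x x_s) -> /=.
by elim: s x_s => //= y s IH; rewrite in_cons => /orP[/eqP ->|/IH]; lia.
Qed.

Theorem proposition6p1 (z1 z2 k m : nat) :
  z2 < z1 -> 1 <= k ->
  npart m (asym z1 z2 k) = npart m (lam_form z1 z2 k).
Proof.
move=> z2_lt_z1 k_pos; have z1_pos : 0 < z1 by apply: leq_ltn_trans z2_lt_z1.
pose f mu := lam z1 z2 k (size (frob_row mu)) (frob_row mu).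
apply: (count_eq_bij (f := f) (undup_uniq _)).
- move=> mu; rewrite mem_partitions => /andP[mu_part /eqP mu_sum] /asboolP mu_asym.
  have [a_strict le_k mu_eq] := asym_eq_frob_part z2_lt_z1 k_pos mu_part mu_asym.
  rewrite mem_partitions is_part_lam ?k_pos ?le_k //.
  rewrite -sumn_frob_part_asym // -mu_eq mu_sum eqxx.
  by split => //; apply/asboolP; exists (size (frob_row mu)), (frob_row mu).
- move=> mu1 mu2; rewrite !mem_filter !mem_partitions.
  move=> /andP[/asboolP asym1 /andP[part1 _]] /andP[/asboolP asym2 /andP[part2 _]].
  have [strict1 _ mu1_eq] := asym_eq_frob_part z2_lt_z1 k_pos part1 asym1.
  have [strict2 _ mu2_eq] := asym_eq_frob_part z2_lt_z1 k_pos part2 asym2.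
  by move=> /(lam_inj k_pos strict1 strict2) eq_row; rewrite mu1_eq mu2_eq eq_row.
- move=> t; rewrite mem_partitions => /andP[t_part /eqP t_sum].
  move=> /asboolP[r [a [le_k size_a a_strict t_eq]]]; rewrite -size_a in le_k t_eq.
  have [mu_part mu_asym mu_row] := asym_frob_part z2_lt_z1 k_pos a_strict le_k.
  exists (frob_part a (asym_col z1 z2 k a)); last by rewrite /f mu_row t_eq.
  by rewrite mem_partitions mu_part sumn_frob_part_asym // -t_eq t_sum eqxx; apply/asboolP.
Qed.
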